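(* Let $\mathcal{H}$ be a complex Hilbert space and let $A\in\mathcal{B}(\mathcal{H})$ be a positive operator with $\dim R(A)\ge 2$. Let $T\in\mathcal{B}_A(\mathcal{H})$ and $q\in\mathbb{C}$ with $|q|\le 1$. Then \[ w_{q,A}(T)\le\Big(|q|^2w_A^2(T)+(1-|q|^2)\|T\|_A^2+2|q|\sqrt{1-|q|^2}\,w_A(T)\|T\|_A\Big)^{1/2}. \]
   Context: $A$ induces the semi-inner product $\langle x,y\rangle_A=\langle Ax,y\rangle$ and seminorm $\|x\|_A=\sqrt{\langle x,x\rangle_A}$. For an operator $S$, $\|S\|_A=\sup\{\|Sx\|_A/\|x\|_A : x\in\overline{R(A)},\,x\neq 0\}$. $\mathcal{B}_A(\mathcal{H})$ is the set of operators $T$ admitting an $A$-adjoint, i.e. an operator $W$ with $\langle Tx,y\rangle_A=\langle x,Wy\rangle_A$ for all $x,y$. The $A$-$q$-numerical radius is $w_{q,A}(T)=\sup\{|\langle Tx,y\rangle_A| : \|x\|_A=\|y\|_A=1,\ \langle x,y\rangle_A=q\}$, and $w_A(T)=w_{1,A}(T)=\sup\{|\langle Tx,x\rangle_A|:\|x\|_A=1\}$ is the $A$-numerical radius. *)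

From HB Require Import structures.
From mathcomp Require Import all_boot all_order all_algebra.
From mathcomp Require Import complex.
From mathcomp Require Import boolp classical_sets reals.

Set Implicit Arguments.
Unset Strict Implicit.
Unset Printing Implicit Defensive.

Import Order.TTheory GRing.Theory Num.Theory.
Local Open Scope ring_scope.
Local Open Scope classical_set_scope.

Section Hilbert.
Variable R : realType.
Variable H : lmodType R[i].
Variable ip : H -> H -> R[i].   (* inner product <x,y>, linear in x *)

Definition cabs (z : R[i]) : R := Normc.normc z.

Definition is_inner_product : Prop :=
  [/\ (forall (a : R[i]) (x y z : H), ip (a *: x + y) z = a * ip x z + ip y z),
      (forall x y : H, ip y x = conjc (ip x y)),
      (forall x : H, 0 <= ip x x) &
      (forall x : H, ip x x = 0 -> x = 0)].

Definition hnorm (x : H) : R := Num.sqrt (complex.Re (ip x x)).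

Definition is_complete : Prop :=
  forall u : nat -> H,
    (forall e : R, 0 < e -> exists N : nat, forall m n : nat,
        (N <= m)%N -> (N <= n)%N -> hnorm (u m - u n) < e) ->
    exists l : H, forall e : R, 0 < e -> exists N : nat, forall n : nat,
        (N <= n)%N -> hnorm (u n - l) < e.

Definition is_hilbert : Prop := is_inner_product /\ is_complete.

Definition bounded_op (T : H -> H) : Prop :=
  (forall (a : R[i]) (x y : H), T (a *: x + y) = a *: T x + T y) /\
  (exists M : R, forall x : H, hnorm (T x) <= M * hnorm x).

Definition positive_op (A : H -> H) : Prop := forall x : H, 0 <= ip (A x) x.

Definition range_dim_ge2 (A : H -> H) : Prop :=
  exists u v : H, (exists x, u = A x) /\ (exists y, v = A y) /\
    (forall a b : R[i], a *: u + b *: v = 0 -> a = 0 /\ b = 0).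

Definition in_closure_range (A : H -> H) (x : H) : Prop :=
  forall e : R, 0 < e -> exists y : H, hnorm (x - A y) < e.

Variable A : H -> H.

Definition ipA (x y : H) : R[i] := ip (A x) y.

Definition normA (x : H) : R := Num.sqrt (complex.Re (ipA x x)).

Definition opnormA (S : H -> H) : R :=
  sup [set r : R | exists x : H,
         [/\ in_closure_range A x, x <> 0 & r = normA (S x) / normA x]].

Definition has_A_adjoint (T : H -> H) : Prop :=
  exists W : H -> H, bounded_op W /\
    forall x y : H, ipA (T x) y = ipA x (W y).

Definition in_BA (T : H -> H) : Prop := bounded_op T /\ has_A_adjoint T.

Definition wqA (q : R[i]) (T : H -> H) : R :=
  sup [set r : R | exists x y : H,
         [/\ normA x = 1, normA y = 1, ipA x y = q & r = cabs (ipA (T x) y)]].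

Definition wA (T : H -> H) : R :=
  sup [set r : R | exists x : H, normA x = 1 /\ r = cabs (ipA (T x) x)].

End Hilbert.

(* Write [y = (conjc q) x + u] with [u] A-orthogonal to [x]: then [||u||_A^2 = 1 - |q|^2] and
   [|<Tx, y>_A| <= |q| |<Tx, x>_A| + |<Tx, u>_A| <= |q| w_A(T) + sqrt(1 - |q|^2) ||T||_A],
   whose square is the bound.  The last step needs [||Tz||_A <= ||T||_A ||z||_A] for every
   [z], although [||T||_A] is a supremum over the closure of [R(A)] only.
   First, [T] is A-bounded: for an A-adjoint [W] and [S = W T], Cauchy-Schwarz makes
   [k |-> ||S^k z||_A] log-convex, and it is [O((||W|| ||T||)^k)], so
   [||Sz||_A <= ||W|| ||T|| ||z||_A] and [||Tz||_A^2 = <z, Sz>_A <= ||W|| ||T|| ||z||_A^2].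
   Second, [R(A)] is dense for [||.||_A]: the step [v |-> v - Av / ||A||] stays in
   [z + R(A)] and lowers [||v||^2] by at least [||v||_A^2 / ||A||], so [||v||_A] tends to 0. *)

From HB Require Import structures.
From mathcomp Require Import all_boot all_order all_algebra.
From mathcomp Require Import complex.
From mathcomp Require Import boolp classical_sets reals.
From mathcomp Require Import ring lra.
Import Order.TTheory GRing.Theory Num.Theory.
Local Open Scope ring_scope.
Local Open Scope complex_scope.

Set Implicit Arguments.
Unset Strict Implicit.
Unset Printing Implicit Defensive.

Lemma le_mul_of_quadratic_ge0 (R : realFieldType) (X Y k : R) : 0 <= X -> 0 <= Y ->
  (forall t, 0 <= t ^+ 2 * X - 2 * t * k + k * Y) -> k <= X * Y.
Proof.
move=> X_ge0 Y_ge0 q_ge0; have [Y_gt0|Y_le0] := ltP 0 Y.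
  by have := q_ge0 Y; nra.
have Y0 : Y = 0 by apply/le_anti/andP.
rewrite Y0 in q_ge0 *.
pose t := k / (X + 1).
have tk : t * (X + 1) = k by rewrite divfK // gt_eqF // ltr_wpDl.
have t0 : t = 0.
  have := q_ge0 t; rewrite -tk => q_t; have tX := mulr_ge0 (sqr_ge0 t) X_ge0.
  by apply/eqP; rewrite -sqrf_eq0 eq_le sqr_ge0 andbT; nra.
by rewrite -tk t0 mul0r mulr0.
Qed.

Lemma bernoulli_ineq (R : realDomainType) (h : R) k : 0 <= h -> 1 + k%:R * h <= (1 + h) ^+ k.
Proof.
move=> h_ge0; elim: k => [|k IH]; first by rewrite mul0r addr0.
have : 0 <= k%:R * h * h by rewrite !mulr_ge0.
rewrite exprS -natr1; nra.
Qed.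

Lemma exists_expr_gt (R : archiRealFieldType) (t B : R) : 1 < t -> exists k, B < t ^+ k.
Proof.
move=> t_gt1; have h_gt0 : 0 < t - 1 by rewrite subr_gt0.
pose k := Num.bound (`|B| / (t - 1)).
exists k; apply: le_lt_trans (ler_norm B) _.
have : `|B| / (t - 1) < k%:R by apply: archi_boundP; rewrite divr_ge0 ?normr_ge0 ?ltW.
rewrite ltr_pdivrMr // => Bk.
have := bernoulli_ineq k (ltW h_gt0); rewrite [1 + (t - 1)]addrC subrK; lra.
Qed.

(* Log-convexity makes a k.+1 / a k nondecreasing; a geometric bound by M^k
   then caps every ratio, in particular the first one, by M. *)
Lemma log_convex_ratio_le (R : archiRealFieldType) (a : nat -> R) (K M : R) : 0 <= M ->
    (forall k, 0 <= a k) -> (forall k, a k.+1 ^+ 2 <= a k * a k.+2) ->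
    (forall k, a k <= K * M ^+ k) ->
  a 1 <= M * a 0.
Proof.
move=> M_ge0 a_ge0 a_lc a_bd; rewrite leNgt; apply/negP => ratio_gt.
have a0_gt0 : 0 < a 0.
  rewrite lt_def a_ge0 andbT; apply: contraTneq ratio_gt => a0.
  have a1 : a 1 = 0.
    by apply/eqP; rewrite -sqrf_eq0 eq_le sqr_ge0 andbT; have := a_lc 0%N; rewrite a0 mul0r.
  by rewrite a0 a1 mulr0 ltxx.
pose rho := a 1 / a 0.
have rho_gt : M < rho by rewrite ltr_pdivlMr.
have rho_a0 : rho * a 0 = a 1 by rewrite divfK // gt_eqF.
have rho_gt0 : 0 < rho by apply: le_lt_trans rho_gt.
have grow k : 0 < a k /\ rho * a k <= a k.+1.
  elim: k => [|k [ak_gt0 ak_le]]; first by rewrite rho_a0.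
  have ak1_gt0 : 0 < a k.+1 by apply: lt_le_trans ak_le; rewrite mulr_gt0.
  by split=> //; have := a_lc k; have := a_ge0 k.+2; nra.
have geom k : rho ^+ k * a 0 <= a k.
  elim: k => [|k IH]; first by rewrite mul1r.
  by rewrite exprS -mulrA; apply: le_trans _ (grow k).2; rewrite ler_wpM2l // ltW.
have [M0|M_neq0] := eqVneq M 0.
  by have := a_bd 1%N; move: ratio_gt; rewrite M0 expr1 !mul0r mulr0; lra.
have M_gt0 : 0 < M by rewrite lt_def M_neq0.
have [k] : exists k, K / a 0 < (rho / M) ^+ k.
  by apply: exists_expr_gt; rewrite ltr_pdivlMr // mul1r.
rewrite expr_div_n ltr_pdivlMr ?exprn_gt0 // mulrAC ltr_pdivrMr //.
by have := le_trans (geom k) (a_bd k); lra.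
Qed.

Lemma sqrtr_sqr_cos_sin (R : rcfType) (c a b : R) :
    0 <= c <= 1 -> 0 <= a -> 0 <= b ->
  Num.sqrt (c ^+ 2 * a ^+ 2 + (1 - c ^+ 2) * b ^+ 2 + 2 * c * Num.sqrt (1 - c ^+ 2) * a * b)
  = c * a + Num.sqrt (1 - c ^+ 2) * b.
Proof.
case/andP=> c_ge0 c_le1 a_ge0 b_ge0.
have s2 : Num.sqrt (1 - c ^+ 2) ^+ 2 = 1 - c ^+ 2.
  by rewrite sqr_sqrtr // subr_ge0 exprn_ile1.
rewrite -[in (1 - _) * _]s2 -[RHS]ger0_norm ?addr_ge0 ?mulr_ge0 ?sqrtr_ge0 //.
by rewrite -sqrtr_sqr; congr Num.sqrt; ring.
Qed.

Section Supremum.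
Variable R : realType.

Lemma le_sup_of_ub (E : set R) r b :
  E r -> (forall u, E u -> u <= b) -> r <= sup E.
Proof.
move=> Er E_le; apply: sup_upper_bound => //; split; first by exists r.
by exists b => u /E_le.
Qed.

Lemma sup_ge0 (E : set R) : (forall r, E r -> 0 <= r) -> 0 <= sup E.
Proof.
move=> E_ge0; have [E_sup|/sup_out->//] := pselect (has_sup E).
have [r Er] := E_sup.1; apply: le_trans (E_ge0 r Er) _.
exact: sup_upper_bound.
Qed.

(* The hypothesis [0 <= b] covers [E = set0], whose supremum is [0]. *)
Lemma sup_le_of_ub (E : set R) b :
  0 <= b -> (forall r, E r -> r <= b) -> sup E <= b.
Proof.
move=> b_ge0 E_le; have [[r Er]|E0] := pselect (exists r, E r).
  by apply: ge_sup; [exists r | move=> u /E_le].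
suff -> : E = set0 by rewrite sup0.
by apply/seteqP; split=> // u Eu; apply: E0; exists u.
Qed.

End Supremum.

Section ComplexModulus.
Variable R : realType.
Implicit Types z : R[i].

Lemma normc_cabs z : `|z| = (cabs z)%:C.
Proof. by case: z => a b; rewrite normc_def. Qed.

Lemma cabs_ge0 z : 0 <= cabs z.
Proof. by case: z => a b; rewrite /cabs /= sqrtr_ge0. Qed.

Lemma cabsM z1 z2 : cabs (z1 * z2) = cabs z1 * cabs z2.
Proof. exact: Normc.normcM. Qed.

Lemma cabsD z1 z2 : cabs (z1 + z2) <= cabs z1 + cabs z2.
Proof. exact: le_normcD. Qed.

Lemma cabs_real (r : R) : cabs r%:C = `|r|.
Proof. by rewrite /cabs /= expr0n addr0 sqrtr_sqr. Qed.

Lemma cabs_sqr z : (cabs z ^+ 2)%:C = z * conjc z.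
Proof. by rewrite -sqr_normc normc_cabs rmorphXn. Qed.

Lemma Re_le_cabs z : complex.Re z <= cabs z.
Proof.
have := normc_ge_Re z; rewrite normc_cabs lecR; exact: le_trans (ler_norm _).
Qed.

Lemma ger0_complex z : 0 <= z -> z = (complex.Re z)%:C.
Proof. by case: z => a b; rewrite lecE /= => /andP[/eqP -> _]. Qed.

Lemma ger0_Re z : 0 <= z -> 0 <= complex.Re z.
Proof. by case: z => a b; rewrite lecE /= => /andP[_]. Qed.

Lemma conjcD z1 z2 : conjc (z1 + z2) = conjc z1 + conjc z2.
Proof. exact: rmorphD. Qed.

Lemma conjcM z1 z2 : conjc (z1 * z2) = conjc z1 * conjc z2.
Proof. exact: rmorphM. Qed.

Lemma conjc_i : conjc 'i = - 'i :> R[i].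
Proof. by apply/eqP; rewrite eq_complex /= oppr0 !eqxx. Qed.

Lemma Re_conjc z : complex.Re (conjc z) = complex.Re z.
Proof. by case: z. Qed.

Lemma conjc_ger0 z : 0 <= z -> conjc z = z.
Proof. by move=> /ger0_complex ->; rewrite conjc_real. Qed.

End ComplexModulus.

Section SesquilinearForm.
Variables (R : realType) (H : lmodType R[i]) (f : H -> H -> R[i]).
Hypothesis f_linear : forall a x y z, f (a *: x + y) z = a * f x z + f y z.

Lemma sesqDl x y z : f (x + y) z = f x z + f y z.
Proof. by rewrite -[x]scale1r f_linear mul1r scale1r. Qed.

Lemma sesq0l z : f 0 z = 0.
Proof. by apply: (addrI (f 0 z)); rewrite -sesqDl !addr0. Qed.

Lemma sesqZl a x z : f (a *: x) z = a * f x z.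
Proof. by rewrite -[a *: x]addr0 f_linear sesq0l addr0. Qed.

Lemma sesqNl x z : f (- x) z = - f x z.
Proof. by rewrite -scaleN1r sesqZl mulN1r. Qed.

Lemma sesqBl x y z : f (x - y) z = f x z - f y z.
Proof. by rewrite sesqDl sesqNl. Qed.

(* Polarization at [x + y] and [x + 'i y]. *)
Lemma sesq_herm_of_ge0 :
    (forall x y z, f z (x + y) = f z x + f z y) ->
    (forall a x z, f z (a *: x) = conjc a * f z x) ->
    (forall x, 0 <= f x x) ->
  forall x y, f y x = conjc (f x y).
Proof.
move=> fDr fZr f_ge0 x y.
have real_sum u v : conjc (f u v) + conjc (f v u) = f u v + f v u.
  have := conjc_ger0 (f_ge0 (u + v)).
  rewrite sesqDl !fDr !conjcD !(conjc_ger0 (f_ge0 _)) => E.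
  transitivity (f u u + conjc (f u v) + (conjc (f v u) + f v v) - f u u - f v v).
    by ring.
  by rewrite E; ring.
have S1 := real_sum x y; have S2 := real_sum x ('i *: y).
rewrite fZr sesqZl !conjcM conjcK conjc_i in S2.
have : (conjc (f x y) - f y x) *+ 2 = 0.
  transitivity ((conjc (f x y) + conjc (f y x) - (f x y + f y x))
     - 'i * ('i * conjc (f x y) + - 'i * conjc (f y x) - (- 'i * f x y + 'i * f y x))
     + ('i ^+ 2 + 1) * (conjc (f x y) - conjc (f y x) + f x y - f y x)).
    by ring.
  by rewrite S1 S2 sqr_i addNr; ring.
by move/eqP; rewrite mulrn_eq0 /= subr_eq0 => /eqP.
Qed.

Hypothesis f_herm : forall x y, f y x = conjc (f x y).

Lemma sesqDr x y z : f z (x + y) = f z x + f z y.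
Proof. by rewrite f_herm sesqDl conjcD -!f_herm. Qed.

Lemma sesqZr a x z : f z (a *: x) = conjc a * f z x.
Proof. by rewrite f_herm sesqZl conjcM -f_herm. Qed.

Lemma sesqNr x z : f z (- x) = - f z x.
Proof. by rewrite -scaleN1r sesqZr rmorphN1 mulN1r. Qed.

Lemma sesqBr x y z : f z (x - y) = f z x - f z y.
Proof. by rewrite sesqDr sesqNr. Qed.

Hypothesis f_ge0 : forall x, 0 <= f x x.

Lemma sesq_diag x : f x x = (hnorm f x ^+ 2)%:C.
Proof. by rewrite /hnorm sqr_sqrtr ?ger0_Re // -ger0_complex. Qed.

Lemma Re_sesq_diag x : complex.Re (f x x) = hnorm f x ^+ 2.
Proof. by rewrite sesq_diag. Qed.

Lemma cabs_sesq_diag x : cabs (f x x) = hnorm f x ^+ 2.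
Proof. by rewrite sesq_diag cabs_real ger0_norm // exprn_ge0 ?sqrtr_ge0. Qed.

Lemma hnorm_eq x r : 0 <= r -> f x x = (r ^+ 2)%:C -> hnorm f x = r.
Proof. by move=> r_ge0 fxx; rewrite /hnorm fxx /= sqrtr_sqr ger0_norm. Qed.

Lemma hnorm0 : hnorm f 0 = 0.
Proof. by rewrite /hnorm sesq0l sqrtr0. Qed.

Lemma hnorm_opp x : hnorm f (- x) = hnorm f x.
Proof. by rewrite /hnorm sesqNl sesqNr opprK. Qed.

Lemma sesq_CS_expand (t : R) x y (a := f x y) :
  f (t%:C *: x - a *: y) (t%:C *: x - a *: y)
  = (t ^+ 2 * hnorm f x ^+ 2 - 2 * t * cabs a ^+ 2 + cabs a ^+ 2 * hnorm f y ^+ 2)%:C.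
Proof.
rewrite sesqBl !sesqBr !sesqZl !sesqZr conjc_real (f_herm x y) !sesq_diag -/a.
transitivity (t%:C ^+ 2 * (hnorm f x ^+ 2)%:C - 2 * t%:C * (a * conjc a)
               + a * conjc a * (hnorm f y ^+ 2)%:C); first by ring.
by rewrite -cabs_sqr; ring.
Qed.

Lemma hnorm_sub_scale (c : R) v w :
  hnorm f (v - c%:C *: w) ^+ 2
  = hnorm f v ^+ 2 - c * complex.Re (f v w) *+ 2 + c ^+ 2 * hnorm f w ^+ 2.
Proof.
apply: complexI; rewrite -sesq_diag sesqBl !sesqBr !sesqZl !sesqZr conjc_real.
rewrite (f_herm v w) !sesq_diag.
transitivity ((hnorm f v ^+ 2)%:C - c%:C * (f v w + conjc (f v w))
              + c%:C ^+ 2 * (hnorm f w ^+ 2)%:C); first by ring.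
by rewrite addcJ; ring.
Qed.

Lemma cauchy_schwarz x y : cabs (f x y) <= hnorm f x * hnorm f y.
Proof.
have : cabs (f x y) ^+ 2 <= hnorm f x ^+ 2 * hnorm f y ^+ 2.
  apply: le_mul_of_quadratic_ge0; rewrite ?sqr_ge0 // => t.
  by rewrite -ler0c -sesq_CS_expand f_ge0.
by rewrite -exprMn ler_pXn2r ?nnegrE ?cabs_ge0 ?mulr_ge0 ?sqrtr_ge0.
Qed.

Lemma ler_hnormD x y : hnorm f (x + y) <= hnorm f x + hnorm f y.
Proof.
have E : hnorm f (x + y) ^+ 2
         = hnorm f x ^+ 2 + hnorm f y ^+ 2 + complex.Re (f x y) *+ 2.
  apply: complexI; rewrite -sesq_diag sesqDl !sesqDr (f_herm x y) !sesq_diag.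
  transitivity ((hnorm f x ^+ 2)%:C + (hnorm f y ^+ 2)%:C + (f x y + conjc (f x y)));
    first by ring.
  by rewrite addcJ; ring.
rewrite -(ler_pXn2r (n := 2)) ?nnegrE ?addr_ge0 ?sqrtr_ge0 // E sqrrD.
have := Re_le_cabs (f x y); have := cauchy_schwarz x y; lra.
Qed.

Lemma ler_hnormB x y : hnorm f (x - y) <= hnorm f x + hnorm f y.
Proof. by rewrite -(hnorm_opp y); apply: ler_hnormD. Qed.

(* Split [y] along [x]: [y = (f x y)^* x + u] with [u] orthogonal to [x]. *)
Lemma cabs_sesq_unit_le z x y (q := f x y) :
    hnorm f x = 1 -> hnorm f y = 1 ->
  cabs (f z y) <= cabs q * cabs (f z x) + Num.sqrt (1 - cabs q ^+ 2) * hnorm f z.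
Proof.
move=> x1 y1; pose u := y - conjc q *: x.
have q_le1 : cabs q <= 1 by rewrite /q -[1](mulr1 1) -{1}x1 -y1 cauchy_schwarz.
have hnorm_u : hnorm f u = Num.sqrt (1 - cabs q ^+ 2).
  apply: hnorm_eq; rewrite ?sqrtr_ge0 // sqr_sqrtr ?subr_ge0 ?exprn_ile1 ?cabs_ge0 //.
  rewrite /u sesqBl !sesqBr !sesqZl !sesqZr conjcK (f_herm x y) -/q !sesq_diag x1 y1.
  by transitivity (1 - q * conjc q); [ring | rewrite -cabs_sqr; ring].
have -> : f z y = q * f z x + f z u.
  by rewrite /u sesqBr sesqZr conjcK addrC subrK.
apply: le_trans (cabsD _ _) _; rewrite cabsM lerD2l.
by apply: le_trans (cauchy_schwarz z u) _; rewrite hnorm_u mulrC.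
Qed.

End SesquilinearForm.

Section LinearMap.
Variables (R : realType) (H : lmodType R[i]) (L : H -> H).
Hypothesis L_linear : forall a x y, L (a *: x + y) = a *: L x + L y.

Lemma linear_fun0 : L 0 = 0.
Proof.
apply: (addrI (L 0)); rewrite addr0 -{1}[L 0]scale1r -L_linear.
by rewrite scaler0 addr0.
Qed.

Lemma linear_funD x y : L (x + y) = L x + L y.
Proof. by rewrite -[x]scale1r L_linear !scale1r. Qed.

End LinearMap.

Lemma bounded_op_gt0 (R : realType) (H : lmodType R[i]) (ip : H -> H -> R[i])
    (L : H -> H) :
  bounded_op ip L -> exists2 M, 0 < M & forall x, hnorm ip (L x) <= M * hnorm ip x.
Proof.
case=> _ [M L_le]; exists (`|M| + 1) => [|x]; first by rewrite ltr_wpDl.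
apply: le_trans (L_le x) _; rewrite ler_wpM2r ?sqrtr_ge0 //.
by apply: le_trans (ler_norm M) _; rewrite lerDl.
Qed.

Section PositiveOperator.
Variables (R : realType) (H : lmodType R[i]) (ip : H -> H -> R[i]) (A : H -> H).
Hypothesis ip_linear : forall a x y z, ip (a *: x + y) z = a * ip x z + ip y z.
Hypothesis ip_herm : forall x y, ip y x = conjc (ip x y).
Hypothesis ip_ge0 : forall x, 0 <= ip x x.
Hypothesis A_linear : forall a x y, A (a *: x + y) = a *: A x + A y.
Hypothesis A_ge0 : positive_op ip A.

Local Notation f := (ipA ip A).
Local Notation nA := (hnorm (ipA ip A)).
Local Notation hn := (hnorm ip).

Lemma ipA_linear a x y z : f (a *: x + y) z = a * f x z + f y z.
Proof. by rewrite /ipA A_linear ip_linear. Qed.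

Lemma ipA_ge0 x : 0 <= f x x.
Proof. exact: A_ge0. Qed.

Lemma ipA_herm x y : f y x = conjc (f x y).
Proof.
apply: (sesq_herm_of_ge0 ipA_linear _ _ ipA_ge0) => [u v z | a u z]; rewrite /ipA.
  exact: (sesqDr ip_linear ip_herm).
exact: (sesqZr ip_linear ip_herm).
Qed.

Variable MA : R.
Hypothesis MA_gt0 : 0 < MA.
Hypothesis A_bound : forall x, hn (A x) <= MA * hn x.

Lemma normA_sqr_le v : nA v ^+ 2 <= MA * hn v ^+ 2.
Proof.
rewrite -(cabs_sesq_diag ipA_ge0).
apply: le_trans (cauchy_schwarz ip_linear ip_herm ip_ge0 (A v) v) _.
by rewrite expr2 mulrA ler_wpM2r ?sqrtr_ge0.
Qed.

Lemma normA_le v : nA v <= Num.sqrt MA * hn v.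
Proof.
rewrite -(ler_pXn2r (n := 2)) ?nnegrE ?mulr_ge0 ?sqrtr_ge0 //.
by rewrite exprMn [Num.sqrt MA ^+ 2]sqr_sqrtr ?normA_sqr_le // (ltW MA_gt0).
Qed.

Lemma hnormA_sqr_le v : hn (A v) ^+ 2 <= MA * nA v ^+ 2.
Proof.
have h_le : hn (A v) ^+ 2 <= nA v * nA (A v).
  rewrite -(cabs_sesq_diag ip_ge0).
  exact: (cauchy_schwarz ipA_linear ipA_herm ipA_ge0 v (A v)).
have := normA_sqr_le (A v); have := ler_wpM2l (sqr_ge0 (nA v)) (normA_sqr_le (A v)).
set h := hn (A v) ^+ 2 in h_le *; have h_ge0 : 0 <= h by apply: sqr_ge0.
move=> hA hA'.
have : h * h <= (MA * nA v ^+ 2) * h.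
  by have := sqrtr_ge0 (complex.Re (f v v)); have := sqrtr_ge0 (complex.Re (f (A v) (A v))); nra.
have [h_gt0|] := ltP 0 h; first by rewrite ler_pM2r.
by move=> h_le0 _; apply: le_trans h_le0 _; rewrite mulr_ge0 ?sqr_ge0 ?ltW.
Qed.

Definition descent v := v - (MA^-1)%:C *: A v.

Lemma hnorm_descent v : hn (descent v) ^+ 2 <= hn v ^+ 2 - MA^-1 * nA v ^+ 2.
Proof.
rewrite /descent (hnorm_sub_scale ip_linear ip_herm ip_ge0) ip_herm Re_conjc.
rewrite -[ip (A v) v]/(f v v) (Re_sesq_diag ipA_ge0).
have c_ge0 : 0 <= MA^-1 by rewrite invr_ge0 ltW.
have : MA^-1 ^+ 2 * hn (A v) ^+ 2 <= MA^-1 * nA v ^+ 2.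
  rewrite expr2 -mulrA ler_wpM2l //; apply: le_trans (ler_wpM2l c_ge0 (hnormA_sqr_le v)) _.
  by rewrite mulrA mulVf ?gt_eqF // mul1r.
lra.
Qed.

Lemma normA_descent v : nA (descent v) <= nA v.
Proof.
rewrite -(ler_pXn2r (n := 2)) ?nnegrE ?sqrtr_ge0 //.
rewrite /descent (hnorm_sub_scale ipA_linear ipA_herm ipA_ge0).
rewrite -[f v (A v)]/(ip (A v) (A v)) (Re_sesq_diag ip_ge0).
have c_ge0 : 0 <= MA^-1 by rewrite invr_ge0 ltW.
have : MA^-1 ^+ 2 * nA (A v) ^+ 2 <= MA^-1 * hn (A v) ^+ 2.
  rewrite expr2 -mulrA ler_wpM2l //; apply: le_trans (ler_wpM2l c_ge0 (normA_sqr_le (A v))) _.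
  by rewrite mulrA mulVf ?gt_eqF // mul1r.
have := mulr_ge0 c_ge0 (sqr_ge0 (hn (A v))); lra.
Qed.

Lemma descent_iter_range x n : exists y, x - iter n descent x = A y.
Proof.
elim: n => [|n [y xy]]; first by exists 0; rewrite subrr (linear_fun0 A_linear).
exists ((MA^-1)%:C *: iter n descent x + y).
by rewrite A_linear -xy iterS /descent opprB addrCA addrC.
Qed.

Lemma descent_iter_le x n :
  hn (iter n descent x) ^+ 2 + MA^-1 * n%:R * nA (iter n descent x) ^+ 2 <= hn x ^+ 2.
Proof.
elim: n => [|n IH]; first by rewrite mulr0 mul0r addr0.
apply: le_trans IH; rewrite iterS; set v := iter n descent x.
have := hnorm_descent v.
have : nA (descent v) ^+ 2 <= nA v ^+ 2.
  by rewrite ler_pXn2r ?nnegrE ?sqrtr_ge0 ?normA_descent.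
have c_ge0 : 0 <= MA^-1 by rewrite invr_ge0 ltW.
have := mulr_ge0 c_ge0 (ler0n _ n.+1); rewrite -natr1; nra.
Qed.

Lemma range_normA_dense x (e : R) : 0 < e -> exists y, nA (x - A y) < e.
Proof.
move=> e_gt0; pose n := Num.bound (MA * hn x ^+ 2 / e ^+ 2).
have [y xy] := descent_iter_range x n; exists y; rewrite -xy subKr.
have : MA * hn x ^+ 2 / e ^+ 2 < n%:R.
  by apply: archi_boundP; rewrite divr_ge0 ?mulr_ge0 ?sqr_ge0 ?sqrtr_ge0 ?ltW.
rewrite ltr_pdivrMr ?exprn_gt0 // => n_gt.
rewrite -(ltr_pXn2r (n := 2)) ?nnegrE ?sqrtr_ge0 ?ltW //.
have := descent_iter_le x n; set g := nA _ ^+ 2; set h := hn _ ^+ 2.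
have [g_ge0 h_ge0] : 0 <= g /\ 0 <= h by split; apply: sqr_ge0.
rewrite -mulrA => le_x; have : n%:R * g <= MA * hn x ^+ 2.
  by rewrite -[_ * g](mulVKf (lt0r_neq0 MA_gt0)) ler_pM2l //; lra.
have := ler0n R n; nra.
Qed.

Section AdjointableOperator.
Variables (T W : H -> H) (MT MW : R).
Hypotheses (MT_ge0 : 0 <= MT) (MW_ge0 : 0 <= MW).
Hypothesis T_bound : forall x, hn (T x) <= MT * hn x.
Hypothesis W_bound : forall x, hn (W x) <= MW * hn x.
Hypothesis T_adjoint : forall x y, f (T x) y = f x (W y).

Local Notation S := (fun x => W (T x)).

Lemma WT_selfadjoint u v : f (S u) v = f u (S v).
Proof. by rewrite ipA_herm -T_adjoint -ipA_herm T_adjoint. Qed.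

Lemma hnorm_iter_WT_le k x : hn (iter k S x) <= (MW * MT) ^+ k * hn x.
Proof.
elim: k => [|k IH]; first by rewrite mul1r.
rewrite iterS exprS -!mulrA; apply: le_trans (W_bound _) _; rewrite ler_wpM2l //.
by apply: le_trans (T_bound _) _; rewrite ler_wpM2l.
Qed.

Lemma normA_iter_WT_log_convex k x :
  nA (iter k.+1 S x) ^+ 2 <= nA (iter k S x) * nA (iter k.+2 S x).
Proof.
rewrite -(cabs_sesq_diag ipA_ge0) {1}iterS WT_selfadjoint.
exact: (cauchy_schwarz ipA_linear ipA_herm ipA_ge0).
Qed.

Lemma normA_WT_le x : nA (S x) <= MW * MT * nA x.
Proof.
apply: (@log_convex_ratio_le _ (fun k => nA (iter k S x)) (Num.sqrt MA * hn x)).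
- by rewrite mulr_ge0.
- by move=> k; apply: sqrtr_ge0.
- by move=> k; apply: normA_iter_WT_log_convex.
move=> k /=; apply: le_trans (normA_le _) _.
by rewrite -mulrA ler_wpM2l ?sqrtr_ge0 // mulrC hnorm_iter_WT_le.
Qed.

Lemma normA_adjoint_le x : nA (T x) <= Num.sqrt (MW * MT) * nA x.
Proof.
rewrite -(ler_pXn2r (n := 2)) ?nnegrE ?mulr_ge0 ?sqrtr_ge0 //.
rewrite -(cabs_sesq_diag ipA_ge0) T_adjoint exprMn sqr_sqrtr ?mulr_ge0 //.
apply: le_trans (cauchy_schwarz ipA_linear ipA_herm ipA_ge0 _ _) _.
have := ler_wpM2l (sqrtr_ge0 (complex.Re (f x x))) (normA_WT_le x).
by rewrite mulrCA -expr2.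
Qed.

End AdjointableOperator.

Section OperatorSeminorm.
Variables (T : H -> H) (C : R).
Hypothesis T_linear : forall a x y, T (a *: x + y) = a *: T x + T y.
Hypothesis C_ge0 : 0 <= C.
Hypothesis T_Abound : forall x, nA (T x) <= C * nA x.

Local Notation N := (opnormA ip A T).

Lemma opnormA_ge0 : 0 <= N.
Proof. by apply: sup_ge0 => r [x [_ _ ->]]; rewrite divr_ge0 ?sqrtr_ge0. Qed.

Lemma normA_T_range_le y : nA (T (A y)) <= N * nA (A y).
Proof.
have [Ay0|Ay_neq0] := eqVneq (nA (A y)) 0.
  by have := T_Abound (A y); rewrite Ay0 !mulr0.
have Ay_gt0 : 0 < nA (A y) by rewrite lt_def Ay_neq0 sqrtr_ge0.
rewrite -ler_pdivrMr //; apply: le_sup_of_ub (C) _ _.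
  exists (A y); split=> //.
    by move=> e e_gt0; exists y; rewrite subrr (hnorm0 ip_linear).
  by move=> Ay0; move: Ay_neq0; rewrite Ay0 (hnorm0 ipA_linear) eqxx.
move=> _ [x [_ _ ->]]; change (nA (T x) / nA x <= C).
have [->|x_neq0] := eqVneq (nA x) 0; first by rewrite invr0 mulr0.
by rewrite ler_pdivrMr ?T_Abound // lt_def x_neq0 sqrtr_ge0.
Qed.

Lemma normA_T_le z : nA (T z) <= N * nA z.
Proof.
apply/ler_addgt0Pr => e e_gt0; have N_ge0 := opnormA_ge0.
pose d := e / (N + C + 1); have NC1_gt0 : 0 < N + C + 1 by rewrite ltr_wpDl ?addr_ge0.
have d_gt0 : 0 < d by rewrite divr_gt0.
have [y zy] := range_normA_dense z d_gt0.
have Tz : nA (T z) <= N * nA (A y) + C * nA (z - A y).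
  have -> : T z = T (A y) + T (z - A y) by rewrite -(linear_funD T_linear) addrC subrK.
  apply: le_trans (ler_hnormD ipA_linear ipA_herm ipA_ge0 _ _) _.
  by rewrite lerD ?normA_T_range_le ?T_Abound.
have Ay : nA (A y) <= nA z + nA (z - A y).
  by rewrite -{1}(subKr z (A y)); apply: (ler_hnormB ipA_linear ipA_herm ipA_ge0).
have NCd : (N + C) * d <= e.
  by rewrite /d mulrA ler_pdivrMr // mulrC ler_pM2l // lerDl.
have := ler_wpM2l N_ge0 Ay; have := ler_wpM2l C_ge0 (ltW zy).
have := sqrtr_ge0 (complex.Re (f (z - A y) (z - A y))); nra.
Qed.

End OperatorSeminorm.

Section NumericalRadius.
Variable T : H -> H.
Hypothesis T_opnormA : forall z, nA (T z) <= opnormA ip A T * nA z.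

Lemma cabs_ipA_le_wA x : nA x = 1 -> cabs (f (T x) x) <= wA ip A T.
Proof.
move=> x1; apply: le_sup_of_ub (opnormA ip A T) _ _ => [|_ [z [z1 ->]]].
  by exists x.
change (nA z = 1) in z1.
apply: le_trans (cauchy_schwarz ipA_linear ipA_herm ipA_ge0 _ _) _.
by rewrite z1 mulr1; apply: le_trans (T_opnormA z) _; rewrite z1 mulr1.
Qed.

Lemma cabs_ipA_unit_le x y : nA x = 1 -> nA y = 1 ->
  cabs (f (T x) y)
  <= cabs (f x y) * wA ip A T + Num.sqrt (1 - cabs (f x y) ^+ 2) * opnormA ip A T.
Proof.
move=> x1 y1.
apply: le_trans (cabs_sesq_unit_le ipA_linear ipA_herm ipA_ge0 (T x) x1 y1) _.
apply: lerD; rewrite ler_wpM2l ?cabs_ge0 ?sqrtr_ge0 ?cabs_ipA_le_wA //.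
by apply: le_trans (T_opnormA x) _; rewrite x1 mulr1.
Qed.

End NumericalRadius.

End PositiveOperator.

Lemma normA_le_opnormA (R : realType) (H : lmodType R[i]) (ip : H -> H -> R[i])
    (A T : H -> H) :
    is_inner_product ip -> bounded_op ip A -> positive_op ip A -> in_BA ip A T ->
  forall z, normA ip A (T z) <= opnormA ip A T * normA ip A z.
Proof.
case=> ip_linear ip_herm ip_ge0 _ A_bounded A_ge0 [T_bounded [W [W_bounded T_adjoint]]].
have [MA MA_gt0 A_bound] := bounded_op_gt0 A_bounded.
have [MT MT_gt0 T_bound] := bounded_op_gt0 T_bounded.
have [MW MW_gt0 W_bound] := bounded_op_gt0 W_bounded.
have T_Abound := normA_adjoint_le ip_linear ip_herm ip_ge0 A_bounded.1 A_ge0 MA_gt0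
  A_bound (ltW MT_gt0) (ltW MW_gt0) T_bound W_bound T_adjoint.
exact: (normA_T_le ip_linear ip_herm ip_ge0 A_bounded.1 A_ge0 MA_gt0 A_bound
  T_bounded.1 (sqrtr_ge0 _) T_Abound).
Qed.

Theorem mainTheorem3 (R : realType) (H : lmodType R[i]) (ip : H -> H -> R[i])
    (hH : is_hilbert ip)
    (A : H -> H) (hAb : bounded_op ip A) (hApos : positive_op ip A)
    (hdim : range_dim_ge2 A)
    (T : H -> H) (hT : in_BA ip A T)
    (q : R[i]) (hq : cabs q <= 1) :
  wqA ip A q T <=
  Num.sqrt (cabs q ^+ 2 * wA ip A T ^+ 2
            + (1 - cabs q ^+ 2) * opnormA ip A T ^+ 2
            + 2 * cabs q * Num.sqrt (1 - cabs q ^+ 2) * wA ip A T * opnormA ip A T).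
Proof.
case: hH => [ip_inner _]; have [ip_linear ip_herm _ _] := ip_inner.
have T_opnormA := normA_le_opnormA ip_inner hAb hApos hT.
have w_ge0 : 0 <= wA ip A T by apply: sup_ge0 => _ [x [_ ->]]; apply: cabs_ge0.
rewrite sqrtr_sqr_cos_sin ?cabs_ge0 ?opnormA_ge0 //.
apply: sup_le_of_ub => [|_ [x [y [x1 y1 <- ->]]]].
  by rewrite addr_ge0 ?mulr_ge0 ?cabs_ge0 ?sqrtr_ge0 ?opnormA_ge0.
exact: (cabs_ipA_unit_le ip_linear ip_herm hAb.1 hApos T_opnormA x1 y1).
Qed.
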